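(* Let $\varepsilon>0$, $\eta^\varepsilon_{\mu\nu}=\mathrm{diag}(1-i\varepsilon,-1,-1,-1)$, and for $x=(x_0,\mathbf{x})\in\mathbb{R}^4$ set $z^2=\eta^\varepsilon_{\mu\nu}x^\mu x^\nu=(1-i\varepsilon)x_0^2-\mathbf{x}^2$ and $x_E^2=x_0^2+\mathbf{x}^2$. Then $$|\sqrt{-z^2}|\le(1+\varepsilon^2)^{1/4}|x_E|,\qquad |\sqrt{-z^2}|\ge\Big(\tfrac1\varepsilon+\sqrt{1+\tfrac{1}{\varepsilon^2}}\Big)^{-1/2}|x_E|.$$ *)

From HB Require Import structures.
From mathcomp Require Import all_boot all_order all_algebra.
From mathcomp Require Export complex.
Set Implicit Arguments. Unset Strict Implicit. Unset Printing Implicit Defensive.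
Import Order.TTheory GRing.Theory Num.Theory.
Local Open Scope ring_scope.

Definition spatial_sq (R : rcfType) (xs : 'rV[R]_3) : R :=
  \sum_(i < 3) xs 0 i ^+ 2.

(* z^2 = eta^eps_{mu nu} x^mu x^nu = (1 - i eps) x0^2 - bold x^2  (complex) *)
Definition zsq (R : rcfType) (eps x0 : R) (xs : 'rV[R]_3) : R[i] :=
  ((x0 ^+ 2 - spatial_sq xs) +i* (- (eps * x0 ^+ 2)))%C.

Definition xE2 (R : rcfType) (x0 : R) (xs : 'rV[R]_3) : R :=
  x0 ^+ 2 + spatial_sq xs.

From HB Require Import structures.
From mathcomp Require Import all_boot all_order all_algebra.
From mathcomp Require Import complex.
From mathcomp Require Import ring lra.
Set Implicit Arguments. Unset Strict Implicit. Unset Printing Implicit Defensive.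
Import Order.TTheory GRing.Theory Num.Theory.
Local Open Scope ring_scope.

(* Write a = x0^2 and s = bold x^2, so that -z^2 = (s - a) + i eps a and
   |sqrt(-z^2)| = ((s - a)^2 + eps^2 a^2)^(1/4) while x_E^2 = a + s.  The upper
   bound is then the polynomial inequality (s - a)^2 + eps^2 a^2 <= (1 + eps^2)(a + s)^2
   for a, s >= 0.  For the lower bound, the sum of squares identity
   (eps^2 + 4)((s - a)^2 + eps^2 a^2) = eps^2 (a + s)^2 + (2 (s - a) - eps^2 a)^2
   gives (a + s)^2 <= (1 + 4/eps^2)((s - a)^2 + eps^2 a^2), and
   1 + 4/eps^2 <= (1/eps + sqrt(1 + 1/eps^2))^2. *)

Local Notation normc := ComplexField.Normc.normc.

Section ComplexModulus.
Variable R : rcfType.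

Lemma normc_ge0 (w : R[i]) : 0 <= normc w.
Proof. by case: w => u v; exact: sqrtr_ge0. Qed.

Lemma normc_sqrtc (w : R[i]) : normc (sqrtc w) = Num.sqrt (normc w).
Proof.
by rewrite -{2}[w]sqr_sqrtc expr2 ComplexField.Normc.normcM -expr2 sqrtr_sqr
  ger0_norm ?normc_ge0.
Qed.

End ComplexModulus.

Section Inequalities.
Variable R : rcfType.
Implicit Types eps a s : R.

Lemma sqr_modulus_le eps a s : 0 <= a -> 0 <= s ->
  (s - a) ^+ 2 + (eps * a) ^+ 2 <= (1 + eps ^+ 2) * (a + s) ^+ 2.
Proof.
move=> a_ge0 s_ge0; rewrite -subr_ge0.
have -> : (1 + eps ^+ 2) * (a + s) ^+ 2 - ((s - a) ^+ 2 + (eps * a) ^+ 2)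
    = 4 * (a * s) + eps ^+ 2 * (s * (2 * a + s)) by ring.
have as_ge0 : 0 <= a * s := mulr_ge0 a_ge0 s_ge0.
have : 0 <= eps ^+ 2 * (s * (2 * a + s)).
  by rewrite mulr_ge0 ?sqr_ge0 // mulr_ge0 //; lra.
lra.
Qed.

Lemma sqr_sum_le_modulus eps a s : eps != 0 ->
  (a + s) ^+ 2 <= (1 + 4 * eps^-1 ^+ 2) * ((s - a) ^+ 2 + (eps * a) ^+ 2).
Proof.
move=> eps_neq0; rewrite -subr_ge0.
have -> : (1 + 4 * eps^-1 ^+ 2) * ((s - a) ^+ 2 + (eps * a) ^+ 2) - (a + s) ^+ 2
    = eps^-1 ^+ 2 * (2 * (s - a) - eps ^+ 2 * a) ^+ 2 by field.
by rewrite mulr_ge0 ?sqr_ge0.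
Qed.

Lemma one_add_4sqr_le (e : R) : 0 <= e -> 1 + 4 * e ^+ 2 <= (e + Num.sqrt (1 + e ^+ 2)) ^+ 2.
Proof.
move=> e_ge0; set r := Num.sqrt _.
have r_sqr : r ^+ 2 = 1 + e ^+ 2 by rewrite sqr_sqrtr // addr_ge0 ?sqr_ge0.
have r_ge0 : 0 <= r := sqrtr_ge0 _.
have e_le_r : e <= r by nra.
nra.
Qed.

End Inequalities.

Section EpsilonInterval.
Variables (R : rcfType) (eps x0 : R) (xs : 'rV[R]_3).

Lemma spatial_sq_ge0 : 0 <= spatial_sq xs.
Proof. by apply: sumr_ge0 => i _; exact: sqr_ge0. Qed.

Lemma xE2_ge0 : 0 <= xE2 x0 xs.
Proof. by rewrite addr_ge0 ?sqr_ge0 ?spatial_sq_ge0. Qed.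

Lemma normcN_zsq : normc (- zsq eps x0 xs)
  = Num.sqrt ((spatial_sq xs - x0 ^+ 2) ^+ 2 + (eps * x0 ^+ 2) ^+ 2).
Proof. by rewrite /zsq /=; congr Num.sqrt; ring. Qed.

Lemma normcN_zsq_le : normc (- zsq eps x0 xs) <= Num.sqrt (1 + eps ^+ 2) * xE2 x0 xs.
Proof.
rewrite normcN_zsq -ler_sqr ?nnegrE ?mulr_ge0 ?sqrtr_ge0 ?xE2_ge0 //.
rewrite [leRHS]exprMn !sqr_sqrtr ?addr_ge0 ?sqr_ge0 //.
rewrite /xE2; exact: (sqr_modulus_le eps (sqr_ge0 x0) spatial_sq_ge0).
Qed.

Lemma normcN_zsq_ge : 0 < eps ->
  xE2 x0 xs / (eps^-1 + Num.sqrt (1 + (eps ^+ 2)^-1)) <= normc (- zsq eps x0 xs).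
Proof.
move=> eps_gt0; rewrite -exprVn; set d := _ + _.
have einv_ge0 : 0 <= eps^-1 by rewrite invr_ge0 (ltW eps_gt0).
have d_gt0 : 0 < d by rewrite ltr_wpDl ?sqrtr_gt0 ?ltr_wpDr ?sqr_ge0.
rewrite ler_pdivrMr // normcN_zsq -ler_sqr ?nnegrE ?mulr_ge0 ?sqrtr_ge0 ?xE2_ge0 ?(ltW d_gt0) //.
rewrite [leRHS]exprMn sqr_sqrtr ?addr_ge0 ?sqr_ge0 // mulrC.
apply: le_trans (sqr_sum_le_modulus (x0 ^+ 2) (spatial_sq xs) (lt0r_neq0 eps_gt0)) _.
by rewrite ler_wpM2r ?addr_ge0 ?sqr_ge0 ?one_add_4sqr_le.
Qed.

End EpsilonInterval.

Theorem lemma4 (R : rcfType) (eps : R) (heps : 0 < eps) (x0 : R) (xs : 'rV[R]_3) :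
  ComplexField.Normc.normc (sqrtc (- zsq eps x0 xs))
    <= Num.sqrt (Num.sqrt (1 + eps ^+ 2)) * Num.sqrt (xE2 x0 xs)
  /\
  Num.sqrt ((eps^-1 + Num.sqrt (1 + (eps ^+ 2)^-1))^-1) * Num.sqrt (xE2 x0 xs)
    <= ComplexField.Normc.normc (sqrtc (- zsq eps x0 xs)).
Proof.
have d_ge0 : 0 <= eps^-1 + Num.sqrt (1 + (eps ^+ 2)^-1).
  by rewrite addr_ge0 ?sqrtr_ge0 // invr_ge0 (ltW heps).
rewrite normc_sqrtc -!sqrtrM ?sqrtr_ge0 ?invr_ge0 //.
split; rewrite ler_sqrt ?mulr_ge0 ?sqrtr_ge0 ?xE2_ge0 ?normc_ge0 //.
  exact: normcN_zsq_le.
by rewrite mulrC; exact: normcN_zsq_ge.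
Qed.
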